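(* Let $\mathcal{X},\mathcal{Y},\mathcal{W}$ be finite nonempty sets, $\pi$ a probability distribution on $\mathcal{X}$, $C$ a channel from $\mathcal{X}$ to $\mathcal{Y}$, and $g:\mathcal{W}\times\mathcal{X}\to[0,\infty)$ such that $\pi_x g(w,x)>0$ for at least one pair $(w,x)$. Define $U(w,y)=\sum_{x}\pi_x C_{xy}g(w,x)$, $\alpha=\sum_{w,y}U(w,y)$ (which is $>0$), $P_{WY}(w,y)=U(w,y)/\alpha$, $\xi_w=\sum_y P_{WY}(w,y)$, and the channel $E$ from $\mathcal{W}$ to $\mathcal{Y}$ by $E_{wy}=P_{WY}(w,y)/\xi_w$ when $\xi_w>0$ (and an arbitrary probability distribution on $\mathcal{Y}$ as the row $E_{w\cdot}$ when $\xi_w=0$). Then $$V_g(\pi,C)=\alpha\cdot V_{g_{\mathrm{id}}}(\xi,E),$$ where $g_{\mathrm{id}}:\mathcal{W}\times\mathcal{W}\to\{0,1\}$ is the identity gain function.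
   Context: A channel from a finite set $\mathcal{A}$ to $\mathcal{Y}$ is a stochastic matrix $C=(C_{ay})$ with $C_{ay}\ge0$ and $\sum_y C_{ay}=1$ (the probability of observing $y$ on input $a$). For a prior $\pi$ on $\mathcal{A}$, a set of guesses $\mathcal{W}$ and a gain function $g:\mathcal{W}\times\mathcal{A}\to\mathbb{R}$, the posterior $g$-vulnerability is $V_g(\pi,C)=\sum_{y\in\mathcal{Y}}\max_{w\in\mathcal{W}}\sum_{a\in\mathcal{A}}\pi_a C_{ay}g(w,a)$. The identity gain function on a set $\mathcal{A}$ has guesses $\mathcal{A}$ and $g_{\mathrm{id}}(w,a)=1$ if $w=a$ and $0$ otherwise (so $V_{g_{\mathrm{id}}}$ is the Bayes vulnerability). *)

From mathcomp Require Import all_boot all_order all_algebra.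
Set Implicit Arguments. Unset Strict Implicit. Unset Printing Implicit Defensive.
Import Order.TTheory GRing.Theory Num.Theory.
Local Open Scope ring_scope.

Section Defs.
Variable R : realFieldType.

Definition is_dist (A : finType) (p : A -> R) :=
  (forall a, 0 <= p a) /\ \sum_a p a = 1.

Definition is_channel (A Y : finType) (C : A -> Y -> R) :=
  forall a, is_dist (C a).

(* max over a nonempty finite set W (w0 is a witness of nonemptiness;
   the value does not depend on it) *)
Definition fmax (W : finType) (w0 : W) (f : W -> R) : R :=
  \big[Num.max/f w0]_(w : W) f w.

Definition Vg (A Y W : finType) (w0 : W) (g : W -> A -> R)
    (pi : A -> R) (C : A -> Y -> R) : R :=
  \sum_(y : Y) fmax w0 (fun w => \sum_(a : A) pi a * C a y * g w a).

Definition gid (W : finType) (w a : W) : R := if w == a then 1 else 0.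

Definition Ufun (X Y W : finType) (pi : X -> R) (C : X -> Y -> R)
    (g : W -> X -> R) (w : W) (y : Y) : R :=
  \sum_(x : X) pi x * C x y * g w x.

Definition alpha (X Y W : finType) (pi : X -> R) (C : X -> Y -> R)
    (g : W -> X -> R) : R :=
  \sum_(w : W) \sum_(y : Y) Ufun pi C g w y.

Definition PWY (X Y W : finType) (pi : X -> R) (C : X -> Y -> R)
    (g : W -> X -> R) (w : W) (y : Y) : R :=
  Ufun pi C g w y / alpha pi C g.

Definition xi (X Y W : finType) (pi : X -> R) (C : X -> Y -> R)
    (g : W -> X -> R) (w : W) : R :=
  \sum_(y : Y) PWY pi C g w y.

Definition Echan (X Y W : finType) (pi : X -> R) (C : X -> Y -> R)
    (g : W -> X -> R) (d : W -> Y -> R) (w : W) (y : Y) : R :=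
  if 0 < xi pi C g w then PWY pi C g w y / xi pi C g w else d w y.

End Defs.

From mathcomp Require Import all_boot all_order all_algebra.
Import Order.TTheory GRing.Theory Num.Theory.
Local Open Scope ring_scope.
Set Implicit Arguments. Unset Strict Implicit. Unset Printing Implicit Defensive.

(* Posterior g-vulnerability is, output by output, a maximum
   over guesses w of the unnormalised gain U(w,y).  Two facts turn this
   into a Bayes vulnerability:
   - the joint-to-conditional factorisation xi_w * E_wy = P_WY(w,y) =
     U(w,y) / alpha holds for every w, including those with xi_w = 0,
     because then the whole row P_WY(w,.) vanishes (it is nonnegative and
     sums to xi_w), so the arbitrary row chosen for E is irrelevant;
   - under the identity gain, the inner sum over secrets collapses to the
     single term xi_w * E_wy.
   Since alpha > 0, it can be pulled out of each maximum (positive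
   homogeneity of max) and out of the sum over outputs. *)

Lemma fmax_mull (R : realFieldType) (W : finType) (w0 : W) (c : R) (f : W -> R) :
  0 <= c -> c * fmax w0 f = fmax w0 (fun w => c * f w).
Proof.
move=> c_ge0; rewrite /fmax.
elim/big_rec2: _ => [//|w a b _ <-].
by rewrite maxr_pMr.
Qed.

Lemma eq_fmax (R : realFieldType) (W : finType) (w0 : W) (f h : W -> R) :
  f =1 h -> fmax w0 f = fmax w0 h.
Proof. by move=> eq_fh; rewrite /fmax eq_fh; apply: eq_bigr. Qed.

Lemma gid_gain (R : realFieldType) (W Y : finType) (p : W -> R)
    (E : W -> Y -> R) (w : W) (y : Y) :
  \sum_(a : W) p a * E a y * gid R w a = p w * E w y.
Proof.
rewrite (bigD1 w) //= big1 => [|a neq_aw]; last first.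
  by rewrite /gid eq_sym (negbTE neq_aw) mulr0.
by rewrite /gid eqxx mulr1 addr0.
Qed.

Section JointDistribution.
Variables (R : realFieldType) (X Y W : finType).
Variables (pi : X -> R) (C : X -> Y -> R) (g : W -> X -> R).
Hypothesis pi_ge0 : forall x, 0 <= pi x.
Hypothesis C_channel : is_channel C.
Hypothesis g_ge0 : forall w x, 0 <= g w x.

Lemma Ufun_ge0 (w : W) (y : Y) : 0 <= Ufun pi C g w y.
Proof.
apply: sumr_ge0 => x _.
by rewrite !mulr_ge0 //; case: (C_channel x).
Qed.

(* Summing over outputs removes the channel: alpha is the total prior
   gain of all guesses. *)
Lemma alphaE : alpha pi C g = \sum_(w : W) \sum_(x : X) pi x * g w x.
Proof.
apply: eq_bigr => w _.
rewrite /Ufun exchange_big; apply: eq_bigr => x _.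
rewrite -[pi x * g w x]mulr1; case: (C_channel x) => _ <-.
by rewrite mulr_sumr; apply: eq_bigr => y _; rewrite mulrAC.
Qed.

Lemma alpha_gt0 (w1 : W) (x1 : X) : 0 < pi x1 * g w1 x1 -> 0 < alpha pi C g.
Proof.
move=> gain_pos.
have gain_ge0 w x : 0 <= pi x * g w x by rewrite mulr_ge0.
rewrite alphaE (bigD1 w1) //= (bigD1 x1) //= -addrA ltr_wpDr //.
by rewrite addr_ge0 ?sumr_ge0 // => w _; rewrite sumr_ge0.
Qed.

Hypothesis alpha_pos : 0 < alpha pi C g.

Lemma PWY_ge0 (w : W) (y : Y) : 0 <= PWY pi C g w y.
Proof. by rewrite divr_ge0 ?Ufun_ge0 ?ltW. Qed.

Lemma PWY_le_xi (w : W) (y : Y) : PWY pi C g w y <= xi pi C g w.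
Proof.
by rewrite /xi (bigD1 y) //= ler_wpDr // sumr_ge0 // => y' _; apply: PWY_ge0.
Qed.

Lemma xi_Echan (d : W -> Y -> R) (w : W) (y : Y) :
  xi pi C g w * Echan pi C g d w y = PWY pi C g w y.
Proof.
rewrite /Echan; case: ifP => [xi_pos|xi_npos].
  by rewrite mulrC divfK ?gt_eqF.
have xi0 : xi pi C g w = 0.
  by apply/eqP; rewrite eq_le leNgt xi_npos /= sumr_ge0 // => y' _; apply: PWY_ge0.
rewrite xi0 mul0r; apply/esym/eqP; rewrite eq_le PWY_ge0 andbT -xi0.
exact: PWY_le_xi.
Qed.

End JointDistribution.

Theorem theorem2 (R : realFieldType) (X Y W : finType)
  (x0 : X) (y0 : Y) (w0 : W)
  (pi : X -> R) (C : X -> Y -> R) (g : W -> X -> R) (d : W -> Y -> R) :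
  is_dist pi -> is_channel C ->
  (forall w x, 0 <= g w x) ->
  (exists w x, 0 < pi x * g w x) ->
  (forall w, is_dist (d w)) ->
  Vg w0 g pi C = alpha pi C g * Vg w0 (@gid R W) (xi pi C g) (Echan pi C g d).
Proof.
move=> [pi_ge0 _] C_channel g_ge0 [w1 [x1 gain_pos]] _.
have alpha_pos := alpha_gt0 pi_ge0 C_channel g_ge0 gain_pos.
rewrite /Vg mulr_sumr; apply: eq_bigr => y _.
rewrite fmax_mull ?ltW //; apply: eq_fmax => w.
rewrite gid_gain xi_Echan //.
by rewrite /PWY mulrC divfK ?gt_eqF.
Qed.
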